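(* Let $Y$ be a metric space with Assouad--Nagata dimension $n$, with constant $c$ as in the definition. There are $a>0$ and $0<b<1$ (depending only on $n$ and $c$) with the following property. Let $w:Y\to[0,\infty)$ be $1$-Lipschitz and $Y_{>0}=w^{-1}((0,\infty))$. Then there is a cover $\mathcal B=(B_i)_{i\in I}$ of $Y_{>0}$ such that (1) $\operatorname{diam}B_i\le a\inf w(B_i)$ for all $i\in I$; and (2) every set $U\subset Y$ with $\operatorname{diam}U\le b\inf w(U)$ meets at most $2(n+1)$ members of $\mathcal B$.
   Context: For $D,s>0$, a $D$-bounded covering of a metric space $Y$ is a family $(B_i)$ of subsets with $\operatorname{diam}B_i\le D$; its $s$-multiplicity is the least integer $m$ such that every $U\subset Y$ with $\operatorname{diam}U\le s$ meets at most $m$ of the $B_i$. The Assouad--Nagata dimension of $Y$ is the least integer $n$ for which there is $c>0$ such that for every $s>0$, $Y$ has a $cs$-bounded covering with $s$-multiplicity at most $n+1$. *)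

From Stdlib Require Import Reals List.
Open Scope R_scope.

Definition is_metric {Y : Type} (d : Y -> Y -> R) : Prop :=
  (forall x y, 0 <= d x y) /\
  (forall x y, d x y = 0 <-> x = y) /\
  (forall x y, d x y = d y x) /\
  (forall x y z, d x z <= d x y + d y z).

Definition diam_le {Y : Type} (d : Y -> Y -> R) (U : Y -> Prop) (r : R) : Prop :=
  forall x y, U x -> U y -> d x y <= r.

(* diam U <= a * inf w(U), unfolded: diam U <= a * w z for every z in U
   (for U empty this holds vacuously, as inf over the empty set is +oo) *)
Definition diam_le_inf {Y : Type} (d : Y -> Y -> R) (U : Y -> Prop)
  (a : R) (w : Y -> R) : Prop :=
  forall z, U z -> diam_le d U (a * w z).

Definition meets {Y : Type} (A B : Y -> Prop) : Prop := exists y, A y /\ B y.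

Definition meets_at_most {Y I : Type} (B : I -> Y -> Prop) (U : Y -> Prop) (m : nat) : Prop :=
  exists l : list I, (length l <= m)%nat /\ forall i, meets (B i) U -> In i l.

Definition covers {Y I : Type} (B : I -> Y -> Prop) : Prop :=
  forall y, exists i, B i y.

Definition has_bounded_covering {Y : Type} (d : Y -> Y -> R) (D s : R) (m : nat) : Prop :=
  exists (I : Type) (B : I -> Y -> Prop),
    covers B /\ (forall i, diam_le d (B i) D) /\
    (forall U : Y -> Prop, diam_le d U s -> meets_at_most B U m).

Definition AN_dim_witness {Y : Type} (d : Y -> Y -> R) (n : nat) (c : R) : Prop :=
  0 < c /\ forall s, 0 < s -> has_bounded_covering d (c * s) s (S n).

Definition AN_dim_eq {Y : Type} (d : Y -> Y -> R) (n : nat) : Prop :=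
  (exists c, AN_dim_witness d n c) /\
  (forall n' c', AN_dim_witness d n' c' -> (n <= n')%nat).

Definition one_lipschitz {Y : Type} (d : Y -> Y -> R) (w : Y -> R) : Prop :=
  forall x y, Rabs (w x - w y) <= d x y.

(* Cut Y_{>0} into the layers where ln w has a fixed integer part k, and
   intersect the k-th layer with a covering of Y at scale s_k = e^(k+1)/2.
   On the k-th layer w is comparable to e^k, which gives (1).  A set U with
   diam U <= inf w(U)/2 only sees two consecutive layers, since w varies by a
   factor 3/2 < e on U, and in each of them it has diameter below s_k, so it
   meets at most n+1 pieces per layer. *)

From Stdlib Require Import Reals ZArith List Lra Lia Classical ClassicalEpsilon.
Open Scope R_scope.

Definition level (x : R) : Z := Int_part (ln x).

Lemma level_spec x :
  0 < x -> exp (IZR (level x)) <= x /\ x < exp (IZR (level x) + 1).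
Proof.
  intros Hx; unfold level.
  destruct (base_Int_part (ln x)) as [Hlo Hhi].
  rewrite <- (exp_ln x Hx) at 2 3; split.
  - destruct Hlo as [Hlt | ->]; [left; apply exp_increasing |]; lra.
  - apply exp_increasing; lra.
Qed.

Lemma level_le_succ x y :
  0 < x -> 0 < y -> y < exp 1 * x -> (level y <= level x + 1)%Z.
Proof.
  intros Hx Hy Hyx.
  assert (Hln : ln y < 1 + ln x).
  { rewrite <- ln_exp with 1, <- ln_mult by (apply exp_pos || exact Hx).
    now apply ln_increasing. }
  destruct (base_Int_part (ln x)), (base_Int_part (ln y)).
  enough (Hlt : IZR (level y) < IZR (level x + 2)) by (apply lt_IZR in Hlt; lia).
  rewrite plus_IZR; unfold level; lra.
Qed.

Lemma Z_within_two_consecutive (P : Z -> Prop) :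
  (forall k k', P k -> P k' -> (k' <= k + 1)%Z) ->
  exists k1, forall k, P k -> k = k1 \/ k = (k1 + 1)%Z.
Proof.
  intros Hclose.
  destruct (classic (exists k0, P k0)) as [[k0 Hk0] | Hnone].
  2:{ exists 0%Z; intros k Hk; exfalso; eauto. }
  destruct (classic (P (k0 - 1)%Z)) as [Hprev | Hnoprev].
  - exists (k0 - 1)%Z; intros k Hk.
    pose proof (Hclose _ _ Hprev Hk); pose proof (Hclose _ _ Hk Hk0); lia.
  - exists k0; intros k Hk.
    pose proof (Hclose _ _ Hk Hk0); pose proof (Hclose _ _ Hk0 Hk).
    assert (k <> (k0 - 1)%Z) by (intros ->; contradiction); lia.
Qed.

Definition layer_scale (k : Z) : R := exp (IZR k + 1) / 2.

Lemma layer_scale_pos k : 0 < layer_scale k.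
Proof. unfold layer_scale; pose proof (exp_pos (IZR k + 1)); lra. Qed.

Section LayeredCovering.

Variables (Y : Type) (d : Y -> Y -> R) (n : nat) (c : R) (w : Y -> R).
Hypothesis c_pos : 0 < c.
Hypothesis w_lip : one_lipschitz d w.

Definition covering_at (s : R) (J : Type) (C : J -> Y -> Prop) : Prop :=
  covers C /\ (forall j, diam_le d (C j) (c * s)) /\
  (forall U : Y -> Prop, diam_le d U s -> meets_at_most C U (S n)).

Variables (J : Z -> Type) (C : forall k, J k -> Y -> Prop).
Hypothesis C_covering : forall k, covering_at (layer_scale k) (J k) (C k).

Definition layer_piece (i : {k : Z & J k}) (y : Y) : Prop :=
  C (projT1 i) (projT2 i) y /\ level (w y) = projT1 i /\ 0 < w y.

Lemma layer_pieces_cover y : 0 < w y -> exists i, layer_piece i y.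
Proof.
  intros Hy.
  destruct (C_covering (level (w y))) as [Hcov _].
  destruct (Hcov y) as [j Hj].
  now exists (existT _ (level (w y)) j).
Qed.

Lemma layer_piece_diam a :
  c * exp 1 <= 2 * a -> forall i, diam_le_inf d (layer_piece i) a w.
Proof.
  intros Ha [k j] z [_ [Hlz Hwz]] x y [Hx _] [Hy _]; simpl in *.
  destruct (C_covering k) as [_ [Hdiam _]].
  pose proof (Hdiam j x y Hx Hy) as Hxy.
  destruct (level_spec _ Hwz) as [Hek _]; rewrite Hlz in Hek.
  unfold layer_scale in Hxy; rewrite exp_plus in Hxy.
  pose proof (exp_pos (IZR k)); pose proof (exp_pos 1).
  assert (Hapos : 0 <= a) by nra.
  assert (c * (exp (IZR k) * exp 1) / 2 <= a * exp (IZR k)) by nra.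
  assert (a * exp (IZR k) <= a * w z) by (apply Rmult_le_compat_l; assumption).
  lra.
Qed.

Section ThinSet.

Variable U : Y -> Prop.
Hypothesis U_thin : diam_le_inf d U (1 / 2) w.

Lemma thin_set_levels_close y y' :
  U y -> U y' -> 0 < w y -> 0 < w y' -> (level (w y') <= level (w y) + 1)%Z.
Proof.
  intros Hy Hy' Hwy Hwy'.
  apply level_le_succ; try assumption.
  pose proof (U_thin y Hy y' y Hy' Hy); pose proof (w_lip y' y).
  pose proof (Rle_abs (w y' - w y)); pose proof (exp_ineq1 1 ltac:(lra)).
  nra.
Qed.

Lemma thin_set_meets_layer k :
  exists l : list (J k), (length l <= S n)%nat /\
    forall j, meets (layer_piece (existT _ k j)) U -> In j l.
Proof.
  destruct (classic (exists y, U y /\ 0 < w y /\ level (w y) = k))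
    as [[y [Hy [Hwy Hly]]] | Hempty].
  - destruct (C_covering k) as [_ [_ Hmult]].
    assert (HUk : diam_le d U (layer_scale k)).
    { intros x x' Hx Hx'.
      pose proof (U_thin y Hy x x' Hx Hx').
      destruct (level_spec _ Hwy) as [_ Hhi]; rewrite Hly in Hhi.
      unfold layer_scale; lra. }
    destruct (Hmult U HUk) as [l [Hlen Hin]].
    exists l; split; [exact Hlen |].
    intros j [x [[Hx _] HUx]]; apply Hin; now exists x.
  - exists nil; split; [simpl; lia |].
    intros j [x [[_ [Hlx Hwx]] HUx]]; exfalso; eauto.
Qed.

Lemma thin_set_meets_at_most : meets_at_most layer_piece U (2 * S n).
Proof.
  destruct (Z_within_two_consecutive
              (fun k => exists y, U y /\ 0 < w y /\ level (w y) = k)) as [k1 Hk1].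
  { intros k k' [y [Hy [Hwy <-]]] [y' [Hy' [Hwy' <-]]].
    exact (thin_set_levels_close y y' Hy Hy' Hwy Hwy'). }
  destruct (thin_set_meets_layer k1) as [l1 [Hlen1 Hin1]].
  destruct (thin_set_meets_layer (k1 + 1)%Z) as [l2 [Hlen2 Hin2]].
  exists (map (existT _ k1) l1 ++ map (existT _ (k1 + 1)%Z) l2); split.
  { rewrite length_app, !length_map; lia. }
  intros [k j] Hmeet; apply in_or_app.
  assert (Hk : k = k1 \/ k = (k1 + 1)%Z).
  { destruct Hmeet as [x [[_ [Hlx Hwx]] HUx]]; apply Hk1; now exists x. }
  destruct Hk as [-> | ->]; [left | right]; apply in_map; auto.
Qed.

End ThinSet.

End LayeredCovering.

Lemma AN_witness_layer_coverings (Y : Type) (d : Y -> Y -> R) (n : nat) (c : R) :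
  AN_dim_witness d n c ->
  exists (J : Z -> Type) (C : forall k, J k -> Y -> Prop),
    forall k, covering_at Y d n c (layer_scale k) (J k) (C k).
Proof.
  intros [_ HAN].
  destruct (choice (fun k (JC : {J : Type & J -> Y -> Prop}) =>
                      covering_at Y d n c (layer_scale k) (projT1 JC) (projT2 JC)))
    as [f Hf].
  { intros k; destruct (HAN _ (layer_scale_pos k)) as [J [C HC]].
    now exists (existT _ J C). }
  exists (fun k => projT1 (f k)), (fun k => projT2 (f k)); exact Hf.
Qed.

Theorem lemma9p2 (n : nat) (c : R) :
  exists a b : R, 0 < a /\ 0 < b /\ b < 1 /\
  forall (Y : Type) (d : Y -> Y -> R),
    is_metric d -> AN_dim_eq d n -> AN_dim_witness d n c ->
    forall w : Y -> R,
      (forall y, 0 <= w y) -> one_lipschitz d w ->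
      exists (I : Type) (B : I -> Y -> Prop),
        (forall i y, B i y -> 0 < w y) /\
        (forall y, 0 < w y -> exists i, B i y) /\
        (forall i, diam_le_inf d (B i) a w) /\
        (forall U : Y -> Prop, diam_le_inf d U b w ->
           meets_at_most B U (2 * S n)).
Proof.
  exists (2 * Rabs c + 1), (1 / 2).
  split; [pose proof (Rabs_pos c); lra |].
  split; [lra |]; split; [lra |].
  intros Y d _ _ Hwit w _ Hlip.
  assert (Hc : 0 < c) by apply Hwit.
  destruct (AN_witness_layer_coverings Y d n c Hwit) as [J [C HC]].
  exists {k : Z & J k}, (layer_piece Y w J C).
  split; [now intros i y [_ [_ Hy]] |].
  split; [exact (layer_pieces_cover Y d n c w J C HC) |].
  split.
  - apply (layer_piece_diam Y d n c w Hc J C HC).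
    rewrite Rabs_right by lra; pose proof exp_le_3; nra.
  - exact (thin_set_meets_at_most Y d n c w Hlip J C HC).
Qed.
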